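(* For any even positive integer $n\geq 4$, $\Delta_D(D_{2n})=\mathcal{P}_e(D_{2n})$.
   Context: $D_{2n}=\langle a,b\mid a^n=b^2=e,\ ab=ba^{-1}\rangle$ ($n\geq 3$). The enhanced power graph $\mathcal{P}_e(G)$ has vertex set $G$ with distinct $x,y$ adjacent iff $\langle x,y\rangle$ is cyclic. The deep commuting graph $\Delta_D(G)$ has vertex set $G$, distinct vertices adjacent iff their preimages commute in a Schur cover $\tilde G$ of $G$ (a central extension $\{e\}\to M(G)\to\tilde G\to G\to\{e\}$ with kernel contained in $Z(\tilde G)\cap[\tilde G,\tilde G]$, of maximal order; $M(G)$ the Schur multiplier). *)

From mathcomp Require Import all_boot all_fingroup all_solvable.
Set Implicit Arguments.
Unset Strict Implicit.
Unset Printing Implicit Defensive.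
Local Open Scope group_scope.

Definition central_stem_ext (hT gT : finGroupType) (H : {group hT})
    (G : {group gT}) (f : {morphism H >-> gT}) : Prop :=
  f @* H = G /\ 'ker f \subset 'Z(H) :&: H^`(1).

Definition schur_cover (hT gT : finGroupType) (H : {group hT})
    (G : {group gT}) (f : {morphism H >-> gT}) : Prop :=
  central_stem_ext G f /\
  forall (kT : finGroupType) (K : {group kT}) (g : {morphism K >-> gT}),
    central_stem_ext G g -> #|K| <= #|H|.

(* Deep commuting graph adjacency w.r.t. the Schur cover f : H ->> G:
   distinct x, y adjacent iff their preimages commute (preimage-independent,
   since the kernel is central). *)
Definition deep_commuting_adj (hT gT : finGroupType) (H : {group hT})
    (f : {morphism H >-> gT}) (x y : gT) : Prop :=
  x != y /\ exists2 x' : hT, x' \in H /\ f x' = x &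
           exists2 y' : hT, y' \in H /\ f y' = y & commute x' y'.

Definition enh_power_adj (gT : finGroupType) (x y : gT) : Prop :=
  x != y /\ cyclic <<[set x; y]>>.

From mathcomp Require Import all_boot all_fingroup all_solvable zify.
(* Lifting a generator of a cyclic <x, y> gives commuting lifts, so only the converse needs
   work.  Commuting lifts map to commuting elements of D_2n: two rotations, a rotation and a
   reflection, or two reflections x, y, the last case reducing to the second through x^-1 y.
   A rotation commuting with a reflection is 1 or the central involution z = r^(n/2), so all
   hinges on lifts u', z' of a reflection u and of z never commuting.  If they did, let r' lift
   r and t = [r', u']: as the kernel is central, r' centralises t and u' inverts it, so H/<t>
   is abelian and the kernel lies in H' <= <t>; also t^(n/2) = [r'^(n/2), u'] = 1 because
   r'^(n/2) and z' differ by a central element.  Since f maps t to r^-2, of order n/2, f would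
   be injective.  But a Schur cover of D_2n is not: D_4n -> D_2n is a stem extension, its
   kernel <x^n> being central and, for n even, inside D_4n' = <x^2>. *)

Set Implicit Arguments.
Unset Strict Implicit.
Unset Printing Implicit Defensive.
Local Open Scope group_scope.

Lemma der1_gen_sub (gT : finGroupType) (A : {set gT}) (M : {group gT}) :
  A \subset 'N(M) -> {in A &, forall a b, [~ a, b] \in M} -> <<A>>^`(1) \subset M.
Proof.
move=> nMA cAM; apply: der1_min; first by rewrite gen_subG.
rewrite quotient_gen // abelian_gen; apply: quotient_cents2r.
by rewrite gen_subG; apply/subsetP => _ /imset2P[a b Aa Ab ->]; apply: cAM.
Qed.

Lemma genU_ker (aT rT : finGroupType) (G : {group aT}) (f : {morphism G >-> rT})
    (B : {set aT}) :
  B \subset G -> f @* G \subset <<f @* B>> -> G :=: <<B :|: 'ker f>>.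
Proof.
move=> sBG sfGB; have sBKG : B :|: 'ker f \subset G.
  by rewrite subUset sBG; apply/subsetP; apply: dom_ker.
apply/eqP; rewrite eqEsubset gen_subG sBKG andbT.
rewrite -(morphimSGK _ (sub_gen (subsetUr _ _))) // morphim_gen //.
by rewrite (subset_trans sfGB) ?genS ?morphimS ?subsetUl.
Qed.

Lemma cyclic_commuting_lifts (aT rT : finGroupType) (G : {group aT})
    (f : {morphism G >-> rT}) (x y : rT) :
    x \in f @* G -> y \in f @* G -> cyclic <<[set x; y]>> ->
  exists2 x', x' \in G /\ f x' = x & exists2 y', y' \in G /\ f y' = y & commute x' y'.
Proof.
move=> fGx fGy /cyclicP[z def_xy].
have : z \in f @* G.
  by rewrite -cycle_subG -def_xy gen_subG subUset !sub1set fGx fGy.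
case/morphimP=> z' Gz' _ def_z; rewrite {z}def_z in def_xy.
have /cycleP[i ->] : x \in <[f z']> by rewrite -def_xy mem_gen ?setU11.
have /cycleP[j ->] : y \in <[f z']> by rewrite -def_xy mem_gen ?setU1r ?set11.
exists (z' ^+ i); first by rewrite groupX ?morphX.
exists (z' ^+ j); first by rewrite groupX ?morphX.
exact/commuteX2/commute_refl.
Qed.

Lemma normal_card2_center (gT : finGroupType) (G K : {group gT}) :
  K <| G -> #|K| = 2 -> K \subset 'Z(G).
Proof.
move=> nKG oK; have [k Kk ntk] : exists2 k, k \in K & k != 1.
  by apply/trivgPn; rewrite trivg_card1 oK.
have defK : K :=: [set 1; k].
  by apply/eqP; rewrite eq_sym eqEcard cards2 eq_sym ntk oK subUset !sub1set group1 Kk.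
apply/subsetP => x Kx; apply/centerP; split; first exact: (subsetP (normal_sub nKG)).
move=> g Gg; move: Kx; rewrite defK => /set2P[-> | ->]; first exact: commute_sym (commute1 g).
have : k ^ g \in [set 1; k] by rewrite -defK memJ_norm // (subsetP (normal_norm nKG)).
by rewrite !inE conjg_eq1 (negbTE ntk) => /eqP/conjg_fixP/commgP.
Qed.

Lemma commute_conjg_fix (gT : finGroupType) (x y : gT) : commute x y -> x ^ y = x.
Proof. by move/commgP/conjg_fixP. Qed.

Section DihedralGenerators.
Variables (gT : finGroupType) (n : nat) (r s : gT).
Hypotheses (rn : r ^+ n = 1) (s2 : s ^+ 2 = 1) (rs : r ^ s = r^-1).
Local Notation D := (<[r]> <*> <[s]>).

Lemma rot_in_dihedral : r \in D.
Proof. by rewrite mem_gen // inE cycle_id. Qed.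

Lemma refl_in_dihedral : s \in D.
Proof. by rewrite mem_gen // inE cycle_id orbT. Qed.

Lemma rot_sq_in_der1 : r ^+ 2 \in D^`(1).
Proof.
have -> : r ^+ 2 = [~ r, s]^-1 by rewrite commgEl rs -invMg invgK.
by rewrite groupV; apply: mem_commg; rewrite ?rot_in_dihedral ?refl_in_dihedral.
Qed.

Lemma dihedral_mulE : D = <[r]> * <[s]>.
Proof. by apply: norm_joinEr; rewrite norms_cycle rs groupV cycle_id. Qed.

Lemma dihedral_reflectionP u : u \in D -> u \notin <[r]> -> exists i, u = r ^+ i * s.
Proof.
rewrite dihedral_mulE => /mulsgP[_ _ /cycleP[i ->] /cycleP[j ->] ->].
rewrite -(expg_mod j s2); have: j %% 2 < 2 by rewrite ltn_mod.
case: (j %% 2) => [|[|//]] _ nr; last by exists i.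
by rewrite expg0 mulg1 mem_cycle in nr.
Qed.

Lemma dihedral_reflection_inv w u :
  w \in <[r]> -> u \in D -> u \notin <[r]> -> w ^ u = w^-1.
Proof.
move=> /cycleP[j ->] Du nu; have [i ->] := dihedral_reflectionP Du nu.
by rewrite conjgM (commute_conjg_fix (commuteX2 _ _ (commute_refl r))) conjXg rs expVgn.
Qed.

Lemma reflection_mulV_rot u v :
  u \in D -> u \notin <[r]> -> v \in D -> v \notin <[r]> -> u^-1 * v \in <[r]>.
Proof.
move=> Du nu Dv nv; have [i ->] := dihedral_reflectionP Du nu.
have [j ->] := dihedral_reflectionP Dv nv.
have -> : (r ^+ i * s)^-1 * (r ^+ j * s) = ((r ^+ i)^-1 * r ^+ j) ^ s.
  by rewrite conjgE invMg !mulgA.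
by rewrite conjMg conjVg !conjXg rs groupM ?groupV ?groupX ?groupV ?cycle_id.
Qed.

Hypothesis cardD : #|D| = n.*2.

Lemma order_dihedral_rot : #[r] = n.
Proof.
have le_r_n : #[r] <= n.
  by rewrite dvdn_leq ?order_dvdn ?rn // -double_gt0 -cardD cardG_gt0.
have le_s_2 : #[s] <= 2 by rewrite dvdn_leq // order_dvdn s2.
have := mul_cardG <[r]> <[s]>; rewrite -dihedral_mulE cardD -!orderE => eD.
have : n.*2 <= #[r] * 2.
  by rewrite (leq_trans _ (leq_mul (leqnn _) le_s_2)) // eD leq_pmulr ?cardG_gt0.
by rewrite -muln2; lia.
Qed.

Lemma refl_notin_rot : s \notin <[r]>.
Proof.
rewrite -cycle_subG; apply/negP => /joing_idPl rsD.
have := cardD; rewrite rsD -orderE order_dihedral_rot -addnn.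
by have := cardG_gt0 D; rewrite cardD double_gt0; lia.
Qed.

Hypothesis n_even : ~~ odd n.

Lemma dihedral_cent_reflection w u : w \in <[r]> -> u \in D -> u \notin <[r]> ->
  commute w u -> w = 1 \/ w = r ^+ n./2.
Proof.
move=> rw Du nu cwu.
have w2 : w ^+ 2 = 1.
  by rewrite expg2 -{1}(commute_conjg_fix cwu) (dihedral_reflection_inv rw Du nu) mulVg.
have def_n : n = (n./2 * 2)%N.
  by rewrite -[n in LHS]odd_double_half (negbTE n_even) add0n muln2.
have z2 : (r ^+ n./2) ^+ 2 = 1 by rewrite -expgM -def_n rn.
move: w2; case/cycleP: rw => j -> /eqP; rewrite -expgM -order_dvdn order_dihedral_rot.
rewrite {1}def_n dvdn_pmul2r // => /dvdnP[k ->].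
rewrite mulnC expgM -(expg_mod k z2); have: k %% 2 < 2 by rewrite ltn_mod.
by case: (k %% 2) => [|[|//]] _; [left | right].
Qed.

Hypothesis n_gt2 : 2 < n.

Lemma dihedral_cent_rot u : u \in D -> commute u r -> u \in <[r]>.
Proof.
move=> Du cur; apply/idPn => nu.
have : r ^+ 2 = 1.
  rewrite expg2 -{1}(commute_conjg_fix (commute_sym cur)).
  by rewrite (dihedral_reflection_inv (cycle_id r) Du nu) mulVg.
move/eqP; rewrite -order_dvdn order_dihedral_rot => dvd_n2.
by have := dvdn_leq (isT : 0 < 2) dvd_n2; rewrite leqNgt n_gt2.
Qed.

Lemma dihedral_center_sub : 'Z(D) \subset <[r ^+ n./2]>.
Proof.
apply/subsetP => z /centerP[Dz cDz]; have Ds := refl_in_dihedral.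
have rz := dihedral_cent_rot Dz (cDz r rot_in_dihedral).
have [-> | ->] := dihedral_cent_reflection rz Ds refl_notin_rot (cDz s Ds).
  exact: group1.
exact: cycle_id.
Qed.

End DihedralGenerators.

Section StemCoverOfDihedral.
Variables (gT hT : finGroupType) (n : nat) (r s : gT).
Variables (H : {group hT}) (f : {morphism H >-> gT}).
Hypotheses (rn : r ^+ n = 1) (s2 : s ^+ 2 = 1) (rs : r ^ s = r^-1).
Local Notation D := (<[r]> <*> <[s]>).
Hypotheses (fH : f @* H = D) (kerZ : 'ker f \subset 'Z(H) :&: H^`(1)).

Lemma stem_ker_cent k h : k \in 'ker f -> h \in H -> commute k h.
Proof. by move/(subsetP kerZ); rewrite inE => /andP[/centerP[_ cHk] _]; apply: cHk. Qed.

Lemma stem_lift x : x \in D -> exists2 x', x' \in H & f x' = x.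
Proof. by rewrite -fH => /morphimP[x' Hx' _ ->]; exists x'. Qed.

Section LiftsOfGenerators.
Variables (u : gT) (r' u' : hT).
Hypotheses (Du : u \in D) (nu : u \notin <[r]>).
Hypotheses (Hr' : r' \in H) (fr' : f r' = r) (Hu' : u' \in H) (fu' : f u' = u).

Lemma lift_rot_refl_commg :
  commute r' [~ r', u'] /\ [~ r', u'] ^ u' = [~ r', u']^-1.
Proof.
set c := r' * r' ^ u'.
have Kc : c \in 'ker f.
  apply/kerP; first by rewrite groupM ?groupJ.
  rewrite morphM ?groupJ // morphJ // fr' fu'.
  by rewrite (dihedral_reflection_inv s2 rs) ?cycle_id ?mulgV.
have def_ru : r' ^ u' = r'^-1 * c by rewrite /c mulKg.
have crt : commute r' [~ r', u'].
  rewrite commgEl def_ru; apply: commuteM; first exact/commuteV/commute_refl.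
  apply: commuteM; first exact/commuteV/commute_refl.
  exact/commute_sym/stem_ker_cent.
split=> //; rewrite conjRg (commute_conjg_fix (commute_refl u')) def_ru commMgJ.
have -> : [~ c, u'] = 1 by apply/eqP/commgP/stem_ker_cent.
rewrite mulg1 (commute_conjg_fix (commute_sym (stem_ker_cent Kc _))) ?groupR ?groupV //.
exact: commVg.
Qed.

Lemma der1_stem_sub_cycle : H^`(1) \subset <[[~ r', u']]>.
Proof.
have [crt tu] := lift_rot_refl_commg.
have HA : {subset [set r'; u'] :|: 'ker f <= H}.
  by move=> a /setUP[/set2P[]-> // | /dom_ker].
have -> : H :=: <<[set r'; u'] :|: 'ker f>>.
  apply: genU_ker; first by rewrite subUset !sub1set Hr' Hu'.
  rewrite fH morphimU !morphim_set1 // fr' fu' join_subG !cycle_subG.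
  have [i def_u] := dihedral_reflectionP s2 rs Du nu.
  have Gr : r \in <<[set r; u]>> by rewrite mem_gen ?setU11.
  have Gu : u \in <<[set r; u]>> by rewrite mem_gen ?setU1r ?set11.
  by rewrite Gr -(mulKg (r ^+ i) s) -def_u groupM ?groupV ?groupX.
have c1 a b : commute a b -> [~ a, b] \in <[[~ r', u']]> by move/commgP/eqP->.
apply: der1_gen_sub.
  apply/subsetP => a Aa; rewrite -cycle_subG norms_cycle.
  case/setUP: Aa => [/set2P[]-> | Ka].
  - by rewrite (commute_conjg_fix (commute_sym crt)) cycle_id.
  - by rewrite tu groupV cycle_id.
  - by rewrite (commute_conjg_fix (commute_sym (stem_ker_cent Ka (groupR Hr' Hu')))) cycle_id.
move=> a b Aa Ab.
have [Ka | nKa] := boolP (a \in 'ker f); first by apply/c1/(stem_ker_cent Ka)/HA.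
have [Kb | nKb] := boolP (b \in 'ker f).
  by apply/c1/commute_sym/(stem_ker_cent Kb)/HA.
move: Aa Ab; rewrite !in_setU (negbTE nKa) (negbTE nKb) !orbF !in_set1.
by do 2![case/orP=> /eqP->]; rewrite ?commgg ?group1 ?cycle_id // -invgR groupV cycle_id.
Qed.

End LiftsOfGenerators.

Hypotheses (cardD : #|D| = n.*2) (n_even : ~~ odd n).

Lemma commute_lifts_refl_z_injm u u' w' :
    u \in D -> u \notin <[r]> -> u' \in H -> f u' = u ->
    w' \in H -> f w' = r ^+ n./2 -> commute u' w' ->
  'injm f.
Proof.
move=> Du nu Hu' fu' Hw' fw' cuw.
have [r' Hr' fr'] := stem_lift (rot_in_dihedral r s).
have [crt _] := lift_rot_refl_commg Du nu Hr' fr' Hu' fu'.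
set t := [~ r', u'].
have t_n2 : t ^+ n./2 = 1.
  rewrite /t -(commXg _ crt).
  have [k Kk ->] : exists2 k, k \in 'ker f & r' ^+ n./2 = k * w'.
    by apply: ker_rcoset; rewrite ?groupX ?morphX ?fr'.
  apply/eqP/commgP/commute_sym/commuteM => //.
  exact/commute_sym/stem_ker_cent.
have ft : #[f t] = n./2.
  rewrite morphR // fr' fu' commgEl (dihedral_reflection_inv s2 rs) ?cycle_id //.
  by rewrite -expg2 orderXdiv orderV (order_dihedral_rot rn s2 rs cardD) ?divn2 ?dvdn2.
have sKt : 'ker f \subset <[t]>.
  apply: subset_trans (der1_stem_sub_cycle Du nu Hr' fr' Hu' fu').
  exact: subset_trans kerZ (subsetIr _ _).
apply/subsetP => _ /[dup] /(subsetP sKt)/cycleP[m ->] /mker.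
rewrite morphX ?groupR // => /eqP; rewrite -order_dvdn ft => dvd_m.
by rewrite inE -order_dvdn (dvdn_trans _ dvd_m) // order_dvdn t_n2.
Qed.

Hypothesis f_ninj : ~~ 'injm f.

Lemma commute_lifts_refl_rot a b a' b' :
    a \in D -> a \notin <[r]> -> b \in <[r]> ->
    a' \in H -> f a' = a -> b' \in H -> f b' = b -> commute a' b' ->
  b = 1.
Proof.
move=> Da na rb Ha' fa' Hb' fb' cab.
have cba : commute b a by rewrite -fa' -fb' /commute -!morphM // cab.
have [// | def_b] := dihedral_cent_reflection rn s2 rs cardD n_even rb Da na cba.
by case/negP: f_ninj; apply: commute_lifts_refl_z_injm Da na Ha' fa' Hb' _ cab; rewrite fb'.
Qed.

Lemma commute_lifts_cyclic x y x' y' :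
    x != y -> x' \in H -> f x' = x -> y' \in H -> f y' = y -> commute x' y' ->
  cyclic <<[set x; y]>>.
Proof.
move=> nxy Hx' fx' Hy' fy' cxy.
have Dx : x \in D by rewrite -fH -fx' mem_morphim.
have Dy : y \in D by rewrite -fH -fy' mem_morphim.
have [rx | nx] := boolP (x \in <[r]>); have [ry | ny] := boolP (y \in <[r]>).
- by apply: cyclicS (cycle_cyclic r); rewrite gen_subG subUset !sub1set rx ry.
- rewrite (commute_lifts_refl_rot Dy ny rx Hy' fy' Hx' fx' (commute_sym cxy)).
  by apply: cyclicS (cycle_cyclic y); rewrite gen_subG subUset !sub1set group1 cycle_id.
- rewrite (commute_lifts_refl_rot Dx nx ry Hx' fx' Hy' fy' cxy).
  by apply: cyclicS (cycle_cyclic x); rewrite gen_subG subUset !sub1set group1 cycle_id.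
have Hxy' : x'^-1 * y' \in H by rewrite groupM ?groupV.
have fxy' : f (x'^-1 * y') = x^-1 * y by rewrite morphM ?groupV // morphV // fx' fy'.
have cxxy : commute x' (x'^-1 * y') by apply/commuteM/cxy/commuteV/commute_refl.
have rxy := reflection_mulV_rot s2 rs Dx nx Dy ny.
have xy1 := commute_lifts_refl_rot Dx nx rxy Hx' fx' Hxy' fxy' cxxy.
by case/eqP: nxy; rewrite -(mulKVg x y) xy1 mulg1.
Qed.

End StemCoverOfDihedral.

Lemma card_dihedralT m : 1 < m -> #|[set: 'D_(2 * m)]| = m.*2.
Proof. by move=> m_gt1; rewrite mul2n card_dihedral. Qed.

Lemma dihedral_generators m : 1 < m -> exists r s : 'D_(2 * m),
  [/\ <[r]> <*> <[s]> = [set: 'D_(2 * m)], r ^+ m = 1, s ^+ 2 = 1 & r ^ s = r^-1].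
Proof.
move=> m_gt1; have := isoGrp_hom (Grp_dihedral m_gt1); rewrite -mul2n.
by case/existsP=> -[r s] /= /eqP[defD rm s2 rs]; exists r, s.
Qed.

Lemma dihedral_double_stem_ext n : ~~ odd n -> 1 < n ->
  exists g : {morphism [set: 'D_(2 * n.*2)] >-> 'D_(2 * n)},
    central_stem_ext [set: 'D_(2 * n)]%G g.
Proof.
move=> n_even n_gt1; have q_gt1 : 1 < n.*2 by rewrite -addnn; lia.
have [r [s [defD rn s2 rs]]] := dihedral_generators n_gt1.
have [X [Y [defE Xq Y2 XY]]] := dihedral_generators q_gt1.
have : [set: 'D_(2 * n)] \homg [set: 'D_(2 * n.*2)].
  have isoE := Grp_dihedral q_gt1; rewrite -mul2n in isoE.
  rewrite (isoE _ [set: 'D_(2 * n)]%G); apply/existsP; exists (r, s).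
  by rewrite /= !xpair_eqE defD -muln2 expgM rn expg1n s2 rs !eqxx.
case/homgP=> g defg; exists g; split=> //.
have oK : #|'ker g| = 2.
  have := Lagrange (subsetT ('ker g)); have := card_morphim g [set: _].
  have card_mul (k : nat) : (k * n.*2)%N = n.*2.*2 -> k = 2 by rewrite -!muln2; nia.
  by rewrite setIid defg !card_dihedralT // => oEK; rewrite -oEK; apply: card_mul.
have sKZ := normal_card2_center (ker_normal g) oK.
rewrite subsetI sKZ; apply: subset_trans sKZ _; rewrite -(group_inj defE).
have cardE : #|<[X]> <*> <[Y]>| = n.*2.*2 by rewrite defE card_dihedralT.
have q_gt2 : 2 < n.*2 by rewrite -addnn; lia.
have q_even : ~~ odd n.*2 by rewrite odd_double.
apply: subset_trans (dihedral_center_sub Xq Y2 XY cardE q_even q_gt2) _.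
have e_half : (n.*2)./2 = (2 * n./2)%N.
  by rewrite doubleK -[LHS]odd_double_half (negbTE n_even) mul2n.
rewrite e_half expgM cycle_subG.
exact: groupX _ (rot_sq_in_der1 XY).
Qed.

Lemma schur_cover_dihedral_ninjm n (hT : finGroupType) (H : {group hT})
    (f : {morphism H >-> 'D_(2 * n)}) :
  ~~ odd n -> 1 < n -> schur_cover [set: 'D_(2 * n)]%G f -> ~~ 'injm f.
Proof.
move=> n_even n_gt1 [[fH _] maxH]; apply/negP => injf.
have [g stem_g] := dihedral_double_stem_ext n_even n_gt1.
have q_gt1 : 1 < n.*2 by rewrite -addnn; lia.
have lt_q_2q : n.*2 < n.*2.*2 by rewrite -addnn; lia.
have := maxH _ _ g stem_g; rewrite -(card_injm injf (subxx _)) fH.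
by rewrite !card_dihedralT // leqNgt lt_q_2q.
Qed.

Theorem theorem5p3 (n : nat) (n_even : ~~ odd n) (n_ge4 : 4 <= n)
    (hT : finGroupType) (H : {group hT})
    (f : {morphism H >-> 'D_(2 * n)}) :
  schur_cover [set: 'D_(2 * n)]%G f ->
  forall x y : 'D_(2 * n), deep_commuting_adj f x y <-> enh_power_adj x y.
Proof.
move=> cover x y; have n_gt1 : 1 < n by apply: leq_trans n_ge4.
have f_ninj := schur_cover_dihedral_ninjm n_even n_gt1 cover.
have [[fH kerZ] _] := cover.
have [r [s [defD rn s2 rs]]] := dihedral_generators n_gt1.
have cardD : #|<[r]> <*> <[s]>| = n.*2 by rewrite defD card_dihedralT.
have fHD : f @* H = <[r]> <*> <[s]> by rewrite defD fH.
split=> [[nxy [x' [Hx' fx'] [y' [Hy' fy'] cxy]]] | [nxy cyc]]; split=> //.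
  exact: (commute_lifts_cyclic rn s2 rs fHD kerZ cardD n_even f_ninj nxy Hx' fx' Hy' fy' cxy).
have fHT z : z \in f @* H by rewrite fH inE.
exact: cyclic_commuting_lifts (fHT x) (fHT y) cyc.
Qed.
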